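(* Let $X$ be a metric space, let $A\subseteq X$ be nonempty and let $Y$ be a hyperconvex metric space. Then for every $f\in\mathcal{N}(A,Y)$, the set $\Phi(f)$ of all $f'\in\mathcal{N}(X,Y)$ with $f'|_A=f$ is externally hyperconvex in $(\mathcal{N}(X,Y),d_\infty)$.
   Context: A metric space $Y$ is hyperconvex if $\bigcap_\alpha B(x_\alpha,r_\alpha)\ne\emptyset$ for every family of points $x_\alpha\in Y$ and $r_\alpha>0$ with $d(x_\alpha,x_\beta)\le r_\alpha+r_\beta$ ($B$ = closed ball). A subset $E$ of a metric space $Z$ is externally hyperconvex (with respect to $Z$) if for any family $\{x_\alpha\}\subseteq Z$ and reals $\{r_\alpha\}$ with $d(x_\alpha,x_\beta)\le r_\alpha+r_\beta$ and $\mathrm{dist}(x_\alpha,E)\le r_\alpha$ for all $\alpha,\beta$, one has $\bigcap_\alpha B(x_\alpha,r_\alpha)\cap E\ne\emptyset$. $\mathcal{N}(X,Y)$ is the set of bounded nonexpansive maps $X\to Y$ with the supremum metric $d_\infty$. *)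

From HB Require Import structures.
From mathcomp Require Import all_boot all_order all_algebra.
From mathcomp Require Import all_classical all_reals ereal.
Set Implicit Arguments. Unset Strict Implicit. Unset Printing Implicit Defensive.
Import Order.TTheory GRing.Theory Num.Theory.
Local Open Scope classical_set_scope.
Local Open Scope ring_scope.
Local Open Scope ereal_scope.
Local Open Scope ring_scope.

Definition is_metric (R : realType) (T : Type) (d : T -> T -> R) : Prop :=
  [/\ (forall x y, 0 <= d x y),
      (forall x y, d x y = 0 <-> x = y),
      (forall x y, d x y = d y x) &
      (forall x y z, d x z <= d x y + d y z)].

Definition cball (R : realType) (T : Type) (d : T -> T -> R) (x : T) (r : R)
  : set T := [set y | d x y <= r].

Definition hyperconvex (R : realType) (T : Type) (d : T -> T -> R) : Prop :=
  forall (I : Type) (x : I -> T) (r : I -> R),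
    (forall i, 0 < r i) ->
    (forall i j, d (x i) (x j) <= r i + r j) ->
    exists y, forall i, cball d (x i) (r i) y.

(* distance from a point to a set, in the extended reals (+oo for the empty set) *)
Definition setdist (R : realType) (T : Type) (d : T -> T -> R) (x : T) (E : set T)
  : \bar R := ereal_inf [set (d x e)%:E | e in E].

Definition ext_hyperconvex (R : realType) (Z : Type) (d : Z -> Z -> R) (E : set Z)
  : Prop :=
  forall (I : Type) (x : I -> Z) (r : I -> R),
    (forall i j, d (x i) (x j) <= r i + r j) ->
    (forall i, (setdist d (x i) E <= (r i)%:E)%E) ->
    exists2 e, E e & forall i, cball d (x i) (r i) e.

Definition nonexpansive_on (R : realType) (X Y : Type) (dX : X -> X -> R)
  (dY : Y -> Y -> R) (D : set X) (f : X -> Y) : Prop :=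
  forall a b, D a -> D b -> dY (f a) (f b) <= dX a b.

Definition bounded_on (R : realType) (X Y : Type) (dY : Y -> Y -> R)
  (D : set X) (f : X -> Y) : Prop :=
  exists M : R, forall a b, D a -> D b -> dY (f a) (f b) <= M.

(* N(D,Y): bounded nonexpansive maps on D (represented by maps X -> Y,
   only their values on D matter) *)
Definition Nmap (R : realType) (X Y : Type) (dX : X -> X -> R)
  (dY : Y -> Y -> R) (D : set X) (f : X -> Y) : Prop :=
  bounded_on dY D f /\ nonexpansive_on dX dY D f.

Definition NXY (R : realType) (X Y : Type) (dX : X -> X -> R) (dY : Y -> Y -> R)
  := {f : X -> Y | Nmap dX dY setT f}.

Definition dinf (R : realType) (X Y : Type) (dX : X -> X -> R) (dY : Y -> Y -> R)
  (f g : NXY dX dY) : R :=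
  sup [set dY (proj1_sig f x) (proj1_sig g x) | x in [set: X]].

Definition Phi (R : realType) (X Y : Type) (dX : X -> X -> R) (dY : Y -> Y -> R)
  (A : set X) (f : X -> Y) : set (NXY dX dY) :=
  [set g | forall a, A a -> proj1_sig g a = f a].

From HB Require Import structures.
From mathcomp Require Import all_boot all_order all_algebra.
From mathcomp Require Import all_classical all_reals ereal.
From mathcomp Require Import lra.

Set Implicit Arguments.
Unset Strict Implicit.
Unset Printing Implicit Defensive.
Import Order.TTheory GRing.Theory Num.Theory.
Local Open Scope classical_set_scope.
Local Open Scope ring_scope.

(* Let the balls B(x_i, r_i) of the family be given in N(X,Y), pairwise
   compatible and each meeting Phi(f) up to distance r_i.  Evaluating at a
   point z, the balls B(x_i z, r_i) of Y are pairwise compatible and, for z in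
   A, compatible with the point f z.  We extend f point by point, by Zorn's
   lemma: a partial nonexpansive graph within r_i of every x_i can always be
   extended at a new point x, since the balls B(x_i x, r_i) together with the
   balls B(y, d(x, a)) for (a, y) in the graph are pairwise compatible, and
   hyperconvexity of Y provides a common point.  A total such graph is a
   nonexpansive extension of f lying in every ball; it is bounded because it
   stays within r_i of the bounded map x_i.  When the family is empty we use
   instead the single ball around the constant map f a0 of radius diam f(A). *)

Lemma hyperconvex_ge0 (R : realType) (Y : Type) (dY : Y -> Y -> R)
    (I : Type) (c : I -> Y) (r : I -> R) :
  hyperconvex dY -> (forall i, 0 <= r i) ->
  (forall i j, dY (c i) (c j) <= r i + r j) ->
  exists y, forall i, dY (c i) y <= r i.
Proof.
move=> hc r_ge0 r_compat.
case: (pselect (exists i, r i = 0)) => [[i0 ri0]|r_neq0].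
  by exists (c i0) => i; have := r_compat i i0; rewrite ri0 addr0.
have r_gt0 i : 0 < r i.
  by rewrite lt_def r_ge0 andbT; apply/eqP => ri0; apply: r_neq0; exists i.
by have [y hy] := hc I c r r_gt0 r_compat; exists y.
Qed.

Section NonexpansiveExtension.
Variables (R : realType) (X Y : Type) (dX : X -> X -> R) (dY : Y -> Y -> R).
Hypotheses (hX : is_metric dX) (hY : is_metric dY) (hYhc : hyperconvex dY).
Variables (J : Type) (g : J -> X -> Y) (r : J -> R).
Hypothesis g_nonexpansive : forall i a b, dY (g i a) (g i b) <= dX a b.
Hypothesis g_compat : forall i j z, dY (g i z) (g j z) <= r i + r j.

(* Relations rather than partial maps: the first clause forces functionality. *)
Definition admissible (H : set (X * Y)) : Prop :=
  (forall p q, H p -> H q -> dY p.2 q.2 <= dX p.1 q.1) /\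
  (forall p i, H p -> dY (g i p.1) p.2 <= r i).

Lemma admissible_bigcup_chain (B : set (X * Y)) (F : set (set (X * Y))) :
  admissible B -> F `<=` (fun G => admissible (G `|` B)) ->
  total_on F subset -> admissible (\bigcup_(G in F) G `|` B).
Proof.
move=> [B_nonexp B_close] F_adm F_chain; split.
  move=> p q [[G1 FG1 G1p]|Bp] [[G2 FG2 G2q]|Bq].
  - case: (F_chain G1 G2 FG1 FG2) => [G12|G21].
      by apply: (proj1 (F_adm G2 FG2)); left => //; exact: G12.
    by apply: (proj1 (F_adm G1 FG1)); left => //; exact: G21.
  - by apply: (proj1 (F_adm G1 FG1)); [left|right].
  - by apply: (proj1 (F_adm G2 FG2)); [right|left].
  - exact: B_nonexp.
move=> p i [[G FG Gp]|Bp]; last exact: B_close.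
by apply: (proj2 (F_adm G FG)); left.
Qed.

Lemma admissible_setU1 (H : set (X * Y)) (x : X) :
  admissible H -> exists y, admissible (H `|` [set (x, y)]).
Proof.
case: hX => dX_ge0 dX_eq0 dX_sym dX_tri; case: hY => dY_ge0 dY_eq0 dY_sym dY_tri.
move=> [H_nonexp H_close].
pose K := (J + {p : X * Y | H p})%type.
pose c (k : K) := match k with inl i => g i x | inr p => (sval p).2 end.
pose rho (k : K) := match k with inl i => r i | inr p => dX x (sval p).1 end.
have [y hy] : exists y, forall k, dY (c k) y <= rho k.
  apply: hyperconvex_ge0 => //.
    case=> [i|[p Hp]] /=; last exact: dX_ge0.
    by have := g_compat i i x; rewrite (proj2 (dY_eq0 _ _)) //; lra.
  case=> [i|[p Hp]] [j|[q Hq]] /=.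
  - exact: g_compat.
  - apply: le_trans (dY_tri _ (g i q.1) _) _; rewrite [r i + _]addrC.
    by apply: lerD; [exact: g_nonexpansive | exact: H_close].
  - rewrite dY_sym; apply: le_trans (dY_tri _ (g j p.1) _) _.
    by apply: lerD; [exact: g_nonexpansive | exact: H_close].
  - apply: le_trans (H_nonexp p q Hp Hq) _.
    by apply: le_trans (dX_tri _ x _) _; rewrite dX_sym.
exists y; split.
  move=> p q [Hp|->] [Hq|->].
  - exact: H_nonexp.
  - by rewrite dX_sym; exact: (hy (inr (exist _ p Hp))).
  - by rewrite dY_sym; exact: (hy (inr (exist _ q Hq))).
  - by rewrite /= (proj2 (dY_eq0 _ _)) // (proj2 (dX_eq0 _ _)).
by move=> p i [Hp|->]; [exact: H_close | exact: (hy (inl i))].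
Qed.

Lemma admissible_total (B : set (X * Y)) : admissible B ->
  exists h : X -> Y, [/\ forall p, B p -> h p.1 = p.2,
    forall a b, dY (h a) (h b) <= dX a b &
    forall i z, dY (g i z) (h z) <= r i].
Proof.
move=> B_adm.
have [M [M_adm M_max]] :=
  Zorn_bigcup (fun F => admissible_bigcup_chain (F := F) B_adm).
have M_total x : exists y, (M `|` B) (x, y).
  apply: contrapT => no_y.
  have [y xy_adm] := admissible_setU1 x M_adm.
  apply: (M_max (M `|` [set (x, y)])).
    split=> [p Mp|]; first by left.
    by move=> sub; apply: no_y; exists y; left; apply: sub; right.
  by rewrite setUAC.
pose h x := sval (cid (M_total x)).
have h_graph x : (M `|` B) (x, h x) := svalP (cid (M_total x)).
case: hX => _ dX_eq0 _ _; case: hY => dY_ge0 dY_eq0 _ _.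
exists h; split.
- move=> [a y] Bay /=; apply/dY_eq0/eqP; rewrite eq_le dY_ge0 andbT.
  have := proj1 M_adm (a, h a) (a, y) (h_graph a) (or_intror Bay).
  by rewrite /= (proj2 (dX_eq0 _ _)).
- by move=> a b; exact: (proj1 M_adm (a, h a) (b, h b)).
- by move=> i z; exact: (proj2 M_adm (z, h z) i).
Qed.

End NonexpansiveExtension.

Section SupMetric.
Variables (R : realType) (X Y : Type) (dX : X -> X -> R) (dY : Y -> Y -> R).
Hypotheses (hX : is_metric dX) (hY : is_metric dY).

Lemma dinf_ge (u v : NXY dX dY) (z : X) :
  dY (sval u z) (sval v z) <= dinf u v.
Proof.
case: hY => _ _ dY_sym dY_tri.
apply: sup_upper_bound; last by exists z.
split; first by exists (dY (sval u z) (sval v z)); exists z.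
case: (svalP u) => [[Mu hu] _]; case: (svalP v) => [[Mv hv] _].
exists (Mu + dY (sval u z) (sval v z) + Mv) => _ [w _ <-].
apply: le_trans (dY_tri _ (sval u z) _) _; rewrite -addrA.
apply: lerD; first exact: hu.
apply: le_trans (dY_tri _ (sval v z) _) _.
by apply: lerD => //; rewrite dY_sym; exact: hv.
Qed.

Lemma dinf_le (x0 : X) (u v : NXY dX dY) (c : R) :
  (forall z, dY (sval u z) (sval v z) <= c) -> dinf u v <= c.
Proof.
move=> uv_le; apply: ge_sup; first by exists (dY (sval u x0) (sval v x0)), x0.
by move=> _ [z _ <-].
Qed.

Lemma Nmap_near (u : NXY dX dY) (h : X -> Y) (c : R) :
  (forall a b, dY (h a) (h b) <= dX a b) ->
  (forall z, dY (sval u z) (h z) <= c) -> Nmap dX dY setT h.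
Proof.
case: hY => _ _ dY_sym dY_tri => h_nonexp uh_le.
split=> [|a b _ _]; last exact: h_nonexp.
case: (proj1 (svalP u)) => M hM; exists (c + (M + c)) => a b _ _.
apply: le_trans (dY_tri _ (sval u a) _) _.
apply: lerD; first by rewrite dY_sym.
apply: le_trans (dY_tri _ (sval u b) _) _.
by apply: lerD; [exact: hM | exact: uh_le].
Qed.

Definition const_NXY (y : Y) : NXY dX dY.
Proof.
exists (fun _ => y).
case: hX => dX_ge0 _ _ _; case: hY => _ dY_eq0 _ _.
have dY_yy : dY y y = 0 by apply/dY_eq0.
by split; [exists 0 | move=> a b _ _]; rewrite dY_yy.
Defined.

Variables (A : set X) (f : X -> Y).

Lemma setdist_Phi_le (u : NXY dX dY) (c : R) (a : X) : A a ->
  (setdist (@dinf R X Y dX dY) u (Phi A f) <= c%:E)%E ->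
  dY (sval u a) (f a) <= c.
Proof.
move=> Aa /(le_trans _) le_c; rewrite -lee_fin; apply: le_c.
apply/ereal_infP => _ [e Phi_e <-]; rewrite lee_fin -(Phi_e a Aa).
exact: dinf_ge.
Qed.

Lemma Phi_within (x0 : X) (I : Type) (i0 : I) (u : I -> NXY dX dY) (r : I -> R) :
  hyperconvex dY -> nonexpansive_on dX dY A f ->
  (forall i j z, dY (sval (u i) z) (sval (u j) z) <= r i + r j) ->
  (forall i a, A a -> dY (sval (u i) a) (f a) <= r i) ->
  exists2 e, Phi A f e & forall i, dinf (u i) e <= r i.
Proof.
move=> hYhc f_nonexp u_compat u_close.
have u_nonexp i a b : dY (sval (u i) a) (sval (u i) b) <= dX a b.
  exact: (proj2 (svalP (u i))).
have graph_f_adm : admissible dX dY (fun i => sval (u i)) r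
    [set (a, f a) | a in A].
  split=> [_ _ [a Aa <-] [b Ab <-]|_ i [a Aa <-]]; first exact: f_nonexp.
  exact: u_close.
have [h [h_ext h_nonexp h_close]] :=
  admissible_total hX hY hYhc u_nonexp u_compat graph_f_adm.
exists (exist _ h (Nmap_near h_nonexp (h_close i0))).
  by move=> a Aa; apply: (h_ext (a, f a)); exists a.
by move=> i; apply: (dinf_le x0) => z; exact: h_close.
Qed.

End SupMetric.

Theorem lemma5p4 (R : realType) (X Y : Type)
  (dX : X -> X -> R) (dY : Y -> Y -> R)
  (hX : is_metric dX) (hY : is_metric dY)
  (A : set X) (hA : A !=set0) (hYhc : hyperconvex dY)
  (f : X -> Y) (hf : Nmap dX dY A f) :
  ext_hyperconvex (@dinf R X Y dX dY) (@Phi R X Y dX dY A f).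
Proof.
case: hA => a0 Aa0; case: hf => [[M hM] f_nonexp].
move=> I u r u_compat u_near.
have u_compat_at i j z : dY (sval (u i) z) (sval (u j) z) <= r i + r j.
  exact: le_trans (dinf_ge hY _ _ z) (u_compat i j).
have u_close i a : A a -> dY (sval (u i) a) (f a) <= r i.
  by move=> Aa; exact: (setdist_Phi_le hY Aa (u_near i)).
case: (pselect (inhabited I)) => [[i0]|I_empty].
  have [e Phi_e e_near] := Phi_within hX hY a0 i0 hYhc f_nonexp u_compat_at u_close.
  by exists e.
have [||e Phi_e _] := Phi_within hX hY a0 tt
  (u := fun _ => const_NXY hX hY (f a0)) (r := fun _ => M) hYhc f_nonexp.
- move=> _ _ z /=; have := hM a0 a0 Aa0 Aa0.
  have -> : dY (f a0) (f a0) = 0 by case: hY => _ dY_eq0 _ _; apply/dY_eq0.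
  lra.
- by move=> _ a Aa; exact: hM.
by exists e => // i; case: I_empty; exact: inhabits i.
Qed.
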